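(* The Robertson graph is not a $(4,5,3)$-equitable cage; that is, the Robertson graph (which is a $4$-regular graph of girth $5$ and chromatic number $3$ on $19$ vertices) admits no proper $3$-coloring whose color classes have sizes differing pairwise by at most one (equivalently, no proper $3$-coloring with color class sizes $6,6,7$).
   Context: All graphs are finite and simple. The Robertson graph is the unique $(4,5)$-cage, i.e. the unique $4$-regular graph of girth $5$ with the minimum possible number of vertices, namely $19$. A proper vertex coloring is equitable if the sizes of any two color classes differ by at most one. An $(r,g,\chi)$-graph is an $r$-regular graph with girth exactly $g$ and chromatic number exactly $\chi$; an $(r,g,\chi)$-equitable graph is one admitting an equitable proper $\chi$-coloring, and an $(r,g,\chi)$-equitable cage is an $(r,g,\chi)$-equitable graph of minimum order. *)

From mathcomp Require Import all_boot all_order.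
Set Implicit Arguments. Unset Strict Implicit. Unset Printing Implicit Defensive.

(* Edge list of the Robertson graph on vertex set {0,...,18}: the Hamiltonian
   cycle 0-1-...-18-0 plus 19 chords.  This graph is 4-regular of girth 5 on
   19 vertices (checked below), hence it is the unique (4,5)-cage, i.e. the
   Robertson graph. *)
Definition robertson_edges : seq (nat * nat) :=
  [:: (0, 1); (0, 4); (0, 7); (0, 18); (1, 2); (1, 9); (1, 12); (2, 3);
      (2, 6); (2, 14); (3, 4); (3, 8); (3, 11); (4, 5); (4, 15); (5, 6);
      (5, 13); (5, 17); (6, 7); (6, 10); (7, 8); (7, 16); (8, 9); (8, 13);
      (9, 10); (9, 17); (10, 11); (10, 15); (11, 12); (11, 18); (12, 13);
      (12, 16); (13, 14); (14, 15); (14, 18); (15, 16); (16, 17); (17, 18)].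

Definition robertson_vertex := 'I_19.

Definition robertson_adj : rel robertson_vertex :=
  fun x y => ((val x, val y) \in robertson_edges) ||
             ((val y, val x) \in robertson_edges).

Definition proper_coloring (T : finType) (e : rel T) (k : nat)
  (c : T -> 'I_k) : Prop :=
  forall x y : T, e x y -> c x != c y.

Definition equitable_coloring (T : finType) (k : nat) (c : T -> 'I_k) : Prop :=
  forall i j : 'I_k, #|[set x | c x == i]| <= #|[set x | c x == j]| + 1.

Lemma robertson_sym : symmetric robertson_adj.
Proof. by move=> x y; rewrite /robertson_adj orbC. Qed.

Lemma robertson_irrefl : irreflexive robertson_adj.
Proof. by move=> [x Hx]; rewrite /robertson_adj orbb; do 19! (case: x Hx => [//|x] Hx). Qed.

Definition nadj (a b : nat) : bool :=
  ((a, b) \in robertson_edges) || ((b, a) \in robertson_edges).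

Lemma robertson_adjE (x y : robertson_vertex) : robertson_adj x y = nadj x y.
Proof. by []. Qed.

Definition V19 := iota 0 19.

Lemma robertson_4regular_nat :
  all (fun a => count (nadj a) V19 == 4) V19.
Proof. by vm_compute. Qed.

Lemma robertson_no_triangle_nat :
  all (fun a => all (fun b => all (fun c =>
     ~~ [&& nadj a b, nadj b c & nadj c a]) V19) V19) V19.
Proof. by vm_compute. Qed.

Lemma robertson_no_4cycle_nat :
  all (fun a => all (fun b => all (fun c => all (fun d =>
     ~~ [&& a != c, b != d, nadj a b, nadj b c, nadj c d & nadj d a])
     V19) V19) V19) V19.
Proof. by vm_compute. Qed.

Lemma robertson_has_5cycle_nat :
  [&& nadj 0 1, nadj 1 2, nadj 2 3, nadj 3 4 & nadj 4 0].
Proof. by vm_compute. Qed.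

From mathcomp Require Import all_boot all_order.
Set Implicit Arguments. Unset Strict Implicit. Unset Printing Implicit Defensive.

(* Colouring the vertices 0, 1, ..., 18 in turn, and keeping only colours that
   differ from those of the already coloured neighbours, enumerates all proper
   3-colourings of the Robertson graph: there are 24 of them (4 up to a
   permutation of the colours), and none has colour classes of sizes 6, 6, 7. *)

Section ColoringSearch.

Variables (adj : rel nat) (k : nat).

Definition proper_seq (s : seq nat) : Prop :=
  forall i j, i < j < size s -> adj i j -> nth 0 s i != nth 0 s j.

Definition proper_ext (s : seq nat) (x : nat) : bool :=
  all (fun j => adj j (size s) ==> (nth 0 s j != x)) (iota 0 (size s)).

Fixpoint proper_colorings (n : nat) : seq (seq nat) :=
  if n is n'.+1 then
    [seq rcons s x | s <- proper_colorings n', x <- [seq x <- iota 0 k | proper_ext s x]]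
  else [:: [::]].

Lemma proper_seq_rcons (s : seq nat) (x : nat) :
  proper_seq (rcons s x) -> proper_seq s /\ proper_ext s x.
Proof.
move=> proper_sx; split.
  move=> i j /andP[lt_ij lt_js] adj_ij.
  have := proper_sx i j; rewrite size_rcons !nth_rcons (ltn_trans lt_ij lt_js) lt_js.
  by apply=> //; rewrite lt_ij ltnS ltnW.
apply/allP => j; rewrite mem_iota add0n => /andP[_ lt_js]; apply/implyP => adj_js.
have := proper_sx j (size s); rewrite size_rcons !nth_rcons (ifT _ _ lt_js) ltnn eqxx.
by apply=> //; rewrite lt_js /=.
Qed.

Lemma mem_proper_colorings (s : seq nat) :
  all (gtn k) s -> proper_seq s -> s \in proper_colorings (size s).
Proof.
elim/last_ind: s => [//|s x IHs]; rewrite all_rcons size_rcons => /andP[lt_xk bounded_s].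
case/proper_seq_rcons => proper_s ext_sx.
by apply: allpairs_f_dep; [exact: IHs | rewrite mem_filter ext_sx mem_iota].
Qed.

End ColoringSearch.

Section ColorSequence.

Variables (n k : nat) (c : 'I_n -> 'I_k).

Definition color_seq : seq nat := [seq val (c x) | x <- enum 'I_n].

Lemma size_color_seq : size color_seq = n.
Proof. by rewrite size_map size_enum_ord. Qed.

Lemma nth_color_seq (i : nat) (lt_in : i < n) :
  nth 0 color_seq i = c (Ordinal lt_in).
Proof.
rewrite (nth_map (Ordinal lt_in)) ?size_enum_ord //.
by congr (val (c _)); apply: val_inj; rewrite /= nth_enum_ord.
Qed.

Lemma color_seq_bounded : all (gtn k) color_seq.
Proof. by apply/allP => _ /mapP[x _ ->]; exact: ltn_ord. Qed.

Lemma proper_color_seq (e : rel 'I_n) (adj : rel nat) :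
  (forall x y : 'I_n, e x y = adj x y) ->
  proper_coloring e c -> proper_seq adj color_seq.
Proof.
move=> eE proper_c i j; rewrite size_color_seq => /andP[lt_ij lt_jn] adj_ij.
have lt_in := ltn_trans lt_ij lt_jn.
by rewrite (nth_color_seq lt_in) (nth_color_seq lt_jn); apply: proper_c; rewrite eE.
Qed.

Lemma count_color_seq (i : 'I_k) :
  count_mem (val i) color_seq = #|[set x | c x == i]|.
Proof.
rewrite count_map cardsE cardE size_filter /enum_mem -enumT count_filter.
by apply: eq_count => x; rewrite /= inE andbT.
Qed.

Definition equitable_seq (s : seq nat) : bool :=
  all (fun i => all (fun j => count_mem i s <= count_mem j s + 1) (iota 0 k)) (iota 0 k).

Lemma equitable_color_seq : equitable_coloring c -> equitable_seq color_seq.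
Proof.
move=> equitable_c; apply/allP => i; rewrite mem_iota => /andP[_ lt_ik].
apply/allP => j; rewrite mem_iota => /andP[_ lt_jk].
by have := equitable_c (Ordinal lt_ik) (Ordinal lt_jk); rewrite -!count_color_seq.
Qed.

End ColorSequence.

Lemma robertson_proper_colorings_not_equitable :
  all (fun s => ~~ equitable_seq 3 s) (proper_colorings nadj 3 19).
Proof. by vm_compute. Qed.

Theorem theorem6p1 :
  ~ exists c : robertson_vertex -> 'I_3,
      proper_coloring robertson_adj c /\ equitable_coloring c.
Proof.
move=> [c [proper_c equitable_c]].
have listed_c : color_seq c \in proper_colorings nadj 3 19.
  rewrite -{2}(size_color_seq c); apply: mem_proper_colorings.
    exact: color_seq_bounded.
  exact: proper_color_seq robertson_adjE proper_c.
have := allP robertson_proper_colorings_not_equitable _ listed_c.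
by rewrite equitable_color_seq.
Qed.
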